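(* Fix integers $k,r\ge 1$ and $n\ge 0$, and let $\rho(k,r)$ be the density on the two-row shape $(n+1)^2=(n+1,n+1)$ given by $\rho_{1,j}=1$ for $1\le j\le n+1$, $\rho_{2,1}=r-1$, and $\rho_{2,j}=k-1$ for $2\le j\le n+1$. Then $$R_{k,r}(n)=\frac{r}{kn+r}\binom{kn+r}{n}=\bigl|\mathrm{SVT}((n+1)^2,\rho(k,r))\bigr|.$$
   Context: A density on a shape $\lambda$ is an assignment of a nonnegative integer $\rho_{i,j}$ to every cell $(i,j)$ (row $i$, column $j$); let $N=\sum\rho_{i,j}$. A standard set-valued Young tableau of shape $\lambda$ and density $\rho$ assigns to each cell $(i,j)$ a set $S_{i,j}$ with $|S_{i,j}|=\rho_{i,j}$, the sets partitioning $[N]$, such that every element of $S_{i,j}$ is smaller than every element of $S_{i,j+1}$ and of $S_{i+1,j}$ whenever those cells exist (conditions involving an empty set are vacuous). $\mathrm{SVT}(\lambda,\rho)$ is the set of these tableaux. *)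

From HB Require Import structures.
From mathcomp Require Import all_boot all_order all_algebra.
Set Implicit Arguments. Unset Strict Implicit. Unset Printing Implicit Defensive.

(* Conventions: a shape is a partition lam : seq nat (row lengths, top to
   bottom). Rows and columns are 0-indexed: cell (i,j) lies in lam iff
   i < size lam and j < nth 0 lam i.  A density is rho : nat -> nat -> nat
   (values outside the shape are irrelevant).  The ground set [N] = {1..N}
   is represented by 'I_N = {0..N-1} (order isomorphic). A set-valued
   tableau (the family of sets S_{i,j} partitioning [N]) is encoded by the
   map sending each element x of [N] to the cell whose set contains x. *)

Definition in_shape (lam : seq nat) (c : nat * nat) : bool :=
  (c.1 < size lam) && (c.2 < nth 0 lam c.1).

Definition shape_width (lam : seq nat) : nat := foldr maxn 0 lam.

Definition svtN (lam : seq nat) (rho : nat -> nat -> nat) : nat :=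
  \sum_(i < size lam) \sum_(j < nth 0 lam i) rho i j.

Definition cell_of (lam : seq nat) := ('I_(size lam) * 'I_(shape_width lam))%type.

Definition cnat (lam : seq nat) (c : cell_of lam) : nat * nat :=
  (nat_of_ord c.1, nat_of_ord c.2).

Definition is_svt (lam : seq nat) (rho : nat -> nat -> nat)
    (f : {ffun 'I_(svtN lam rho) -> cell_of lam}) : bool :=
  [&&
      [forall x, in_shape lam (cnat (f x))],
      [forall c : cell_of lam, in_shape lam (cnat c) ==>
          (#|[set x | f x == c]| == rho c.1 c.2)],
      [forall x, forall y,
          ((cnat (f y)).1 == (cnat (f x)).1) &&
          ((cnat (f y)).2 == (cnat (f x)).2.+1) ==> (x < y)] &
      [forall x, forall y,
          ((cnat (f y)).1 == (cnat (f x)).1.+1) &&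
          ((cnat (f y)).2 == (cnat (f x)).2) ==> (x < y)]].

Definition svt_count (lam : seq nat) (rho : nat -> nat -> nat) : nat :=
  #|[pred f : {ffun 'I_(svtN lam rho) -> cell_of lam} | is_svt f]|.

Definition rho_kr (k r : nat) (i j : nat) : nat :=
  if i == 0 then 1 else if j == 0 then r - 1 else k - 1.

Definition two_row (n : nat) : seq nat := [:: n.+1; n.+1].

(* Write K = k - 1 and s = r - 1.  A set-valued tableau of shape (n+1, n+1) and
   density rho(k,r) is determined by its row word, which records for 1, ..., N
   whether the entry lies in the second row: the row condition forces the entries
   of a row to increase with the column, and the densities then say which column
   the t-th entry of a row occupies.  The column condition says that an entry of
   the second row in column c comes after c + 1 entries of the first row.  So the
   row words are exactly the words beginning with a first-row letter, with n + 1
   first-row letters, whose remaining letters form a ballot word: starting with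
   credit s, each first-row letter adds K and each second-row letter spends 1.
   Splitting on the first letter, ballot words with y first-row letters and
   credit s number C(L, y) - K C(L, y - 1) with L = K y + s + y, a Pascal-type
   recursion, and this equals r / (k n + r) * C(k n + r, n). *)

From HB Require Import structures.
From mathcomp Require Import all_boot all_order all_algebra.
From mathcomp Require Import zify ring.
Import GRing.Theory Num.Theory.
Set Implicit Arguments. Unset Strict Implicit. Unset Printing Implicit Defensive.

Fixpoint bool_words (m : nat) : seq (seq bool) :=
  if m is m'.+1 then
    [seq true :: w | w <- bool_words m'] ++ [seq false :: w | w <- bool_words m']
  else [:: [::]].

Lemma cons_inj (T : Type) (x : T) : injective (cons x).
Proof. by move=> ? ? []. Qed.

Lemma mem_bool_words m w : (w \in bool_words m) = (size w == m).
Proof.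
elim: m w => [|m IH] [|b w] //=; rewrite mem_cat.
  by apply/norP; split; apply/mapP => -[].
rewrite eqSS -IH.
by case: b; rewrite (mem_map (@cons_inj _ _));
  case: (w \in _); rewrite ?orbT ?orbF //; apply/negbTE/mapP => -[].
Qed.

Lemma bool_words_uniq m : uniq (bool_words m).
Proof.
elim: m => //= m IH; rewrite cat_uniq !(map_inj_uniq (@cons_inj _ _)) IH andbT /=.
by apply/hasPn => _ /mapP [w _ ->]; apply/mapP => -[].
Qed.

Lemma count_bool_wordsS (p : pred (seq bool)) m :
  count p (bool_words m.+1)
  = count (p \o cons true) (bool_words m) + count (p \o cons false) (bool_words m).
Proof. by rewrite /= count_cat !count_map. Qed.

Section Ballot.
Variable K : nat.

Fixpoint ballot (s : nat) (w : seq bool) : bool :=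
  match w with
  | [::] => true
  | true :: w' => (0 < s) && ballot s.-1 w'
  | false :: w' => ballot (s + K) w'
  end.

Lemma ballotP s w :
  reflect (forall i, nth false w i -> count id (take i w) < K * count negb (take i w) + s)
          (ballot s w).
Proof.
elim: w s => [|[] w IH] s /=.
- by apply: ReflectT => -[].
- apply: (iffP andP) => [[s_gt0 /IH ballot_w] [|i] /= w_i|h]; first lia.
    by have := ballot_w i w_i; lia.
  have s_gt0 : 0 < s by have := h 0 isT; rewrite /=; lia.
  by split=> //; apply/IH => i w_i; have := h i.+1 w_i; rewrite /=; lia.
- apply: (iffP (IH _)) => [h [|i] //= w_i|h i w_i].
  + by have := h i w_i; lia.
  + by have := h i.+1 w_i; rewrite /=; lia.
Qed.

Definition ballot_number (y s : nat) : rat :=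
  ('C(K * y + s + y, y)%:R
   - K%:R * (if y is y'.+1 then 'C(K * y + s + y, y')%:R else 0))%R.

Lemma ballot_number0 s : ballot_number 0 s = 1%R.
Proof. by rewrite /ballot_number bin0 mulr0 subr0. Qed.

Lemma ballot_numberS0 y : ballot_number y.+1 0 = ballot_number y K.
Proof.
rewrite /ballot_number.
have -> : K * y.+1 + 0 + y.+1 = (K * y + K + y).+1 by lia.
have binM : 'C(K * y + K + y, y.+1) = K * 'C(K * y + K + y, y).
  apply/eqP; rewrite -(eqn_pmul2l (ltn0Sn y)) mul_bin_left mulnCA.
  by rewrite (_ : _ - y = y.+1 * K) //; lia.
move: (K * y + K + y) binM => M binM.
by case: y binM => [|y] binM; rewrite !binS binM ?bin0 !natrD !natrM; ring.
Qed.

Lemma ballot_numberSS y s :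
  ballot_number y.+1 s.+1 = (ballot_number y.+1 s + ballot_number y (s.+1 + K))%R.
Proof.
rewrite /ballot_number.
have -> : K * y.+1 + s.+1 + y.+1 = (K * y.+1 + s + y.+1).+1 by lia.
have -> : K * y + (s.+1 + K) + y = K * y.+1 + s + y.+1 by lia.
by rewrite !binS; case: y => [|y]; rewrite ?bin0 ?binS !natrD; ring.
Qed.

Lemma count_ballot L y s : K * y + s + y = L ->
  ((count (fun w => ballot s w && (count negb w == y)) (bool_words L))%:R
   = ballot_number y s)%R.
Proof.
elim: L y s => [|L IH] y s def_L.
  have [-> ->] : y = 0 /\ s = 0 by lia.
  by rewrite ballot_number0.
rewrite count_bool_wordsS natrD.
have -> : count ((fun w => ballot s w && (count negb w == y)) \o cons true) (bool_words L)
    = if s is s'.+1 then count (fun w => ballot s' w && (count negb w == y)) (bool_words L)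
      else 0.
  by case: s {def_L} => [|s']; [exact: count_pred0 | exact: eq_count].
have -> : count ((fun w => ballot s w && (count negb w == y)) \o cons false) (bool_words L)
    = if y is y'.+1 then count (fun w => ballot (s + K) w && (count negb w == y')) (bool_words L)
      else 0.
  case: y {def_L} => [|y']; last exact: eq_count.
  by rewrite (eq_count (a2 := pred0)) ?count_pred0 // => w /=; rewrite andbF.
case: s def_L => [|s] def_L; case: y def_L => [|y] def_L.
- lia.
- by rewrite add0r ballot_numberS0 (IH y K) //; lia.
- by rewrite addr0 ballot_number0 (IH 0 s) ?ballot_number0 //; lia.
- by rewrite ballot_numberSS (IH y.+1 s) ?(IH y (s.+1 + K)) //; lia.
Qed.

Lemma ballot_number_closed n s :
  ballot_number n s
  = (s.+1%:R / (K.+1 * n + s.+1)%:R * 'C(K.+1 * n + s.+1, n)%:R)%R.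
Proof.
have -> : K.+1 * n + s.+1 = (K * n + s + n).+1 by lia.
rewrite /ballot_number; case: n => [|m].
  by rewrite !bin0 mulr0 subr0 mulr1 muln0 add0n addn0 divff // pnatr_eq0.
set L := K * m.+1 + s + m.+1; rewrite binS natrD.
have binL : (m.+1 * 'C(L, m.+1) = (K * m.+1 + s.+1) * 'C(L, m))%N.
  by rewrite mul_bin_left; congr (_ * _)%N; rewrite /L; lia.
have -> : ('C(L, m.+1)%:R = (K * m.+1 + s.+1)%:R / m.+1%:R * 'C(L, m)%:R :> rat)%R.
  by rewrite mulrAC -natrM -binL natrM mulrC mulKf ?pnatr_eq0.
rewrite /L; move: ('C(_, m)%:R : rat) => B.
rewrite !natrD !natrM -!natr1; field.
by rewrite !(nat1r, natr1) -natrM -!natrD natr1 !pnatr_eq0.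
Qed.

End Ballot.

Section PrefixCount.
Variables (N : nat) (w : seq bool).
Hypothesis size_w : size w = N.

Lemma count_takeS (p : pred bool) y : y < N ->
  count p (take y.+1 w) = count p (take y w) + p (nth false w y).
Proof. by move=> y_lt; rewrite (take_nth false) ?size_w // -cats1 count_cat /= addn0. Qed.

Lemma count_take_mono (p : pred bool) y z : y <= z -> count p (take y w) <= count p (take z w).
Proof. by move=> le_yz; rewrite -(subnKC le_yz) takeD count_cat leq_addr. Qed.

Lemma count_take_lt (p : pred bool) y : y < N -> p (nth false w y) ->
  count p (take y w) < count p w.
Proof.
move=> y_lt p_y; rewrite -{2}(cat_take_drop y w) count_cat (drop_nth false) ?size_w //=.
by rewrite p_y; lia.
Qed.

Lemma card_ord_prefixS (Q : pred nat) m : m < N ->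
  #|[set y : 'I_N | (y < m.+1) && Q y]| = #|[set y : 'I_N | (y < m) && Q y]| + Q m.
Proof.
move=> m_lt; have [Qm|nQm] := boolP (Q m).
  rewrite (_ : [set y : 'I_N | _] = Ordinal m_lt |: [set y : 'I_N | (y < m) && Q y]).
    by rewrite cardsU1 !inE ltnn addnC.
  apply/setP => y; rewrite !inE ltnS leq_eqVlt -val_eqE /=.
  by case: eqP => [->|]; rewrite ?Qm.
rewrite addn0; apply: eq_card => y; rewrite !inE ltnS leq_eqVlt.
by case: eqP => [->|] //=; rewrite (negbTE nQm) andbF.
Qed.

Lemma count_take_card (p : pred bool) y :
  count p (take y w) = #|[set z : 'I_N | (z < y) && p (nth false w z)]|.
Proof.
elim: y => [|y IH].
  by rewrite take0 (eq_card (B := pred0)) ?card0 // => z; rewrite !inE.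
case: (ltnP y N) => y_lt.
  by rewrite count_takeS // IH (card_ord_prefixS (fun z => p (nth false w z))).
rewrite !take_oversize ?size_w ?(leqW y_lt) // in IH *; rewrite IH.
by apply: eq_card => z; rewrite !inE !(leq_trans (ltn_ord z)) ?(leqW y_lt).
Qed.

Lemma card_rank_window (p : pred bool) lo hi : lo <= hi ->
  #|[set y : 'I_N | p (nth false w y) && (lo <= count p (take y w) < hi)]|
  = minn hi (count p w) - minn lo (count p w).
Proof.
move=> le_lohi.
suff prefix m : m <= N ->
    #|[set y : 'I_N | (y < m) && (p (nth false w y) && (lo <= count p (take y w) < hi))]|
    = minn hi (count p (take m w)) - minn lo (count p (take m w)).
  have := prefix N (leqnn N); rewrite (_ : take N w = w) -?size_w ?take_size // => <-.
  by apply: eq_card => y; rewrite !inE ltn_ord.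
elim: m => [|m IH] m_le.
  by rewrite take0 (eq_card (B := pred0)) ?card0 ?minn0 // => y; rewrite !inE.
rewrite (card_ord_prefixS (fun y => p (nth false w y) && (lo <= count p (take y w) < hi))) //.
rewrite IH ?(ltnW m_le) // count_takeS //.
by case: (p _) => /=; lia.
Qed.

End PrefixCount.

Section SecondRowColumns.
Variables K s : nat.

(* Columns 0 and c > 0 of the second row hold s and K entries: [row1_start c]
   entries lie left of column c, and the t-th entry (from 0) lies in column
   [row1_col t]; for K = 0 the latter is junk unless t < s, hence the
   hypotheses t < K * n + s below. *)
Definition row1_start (c : nat) : nat := if c is c'.+1 then s + K * c' else 0.

Definition row1_col (t : nat) : nat := if t < s then 0 else ((t - s) %/ K).+1.

Lemma row1_startS c : row1_start c.+1 = row1_start c + rho_kr K.+1 s.+1 1 c.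
Proof. by rewrite /rho_kr /=; case: c => [|c] /=; rewrite !subn1 /=; lia. Qed.

Lemma row1_col_mono : {homo row1_col : t u / t <= u}.
Proof.
move=> t u le_tu; rewrite /row1_col.
case: (ltnP t s) => [//|le_st]; rewrite (ltnNge u) (leq_trans le_st le_tu) ltnS.
by rewrite leq_div2r // leq_sub2r.
Qed.

Lemma row1_col_ltS n t c : t < K * n + s ->
  (row1_col t < c.+1) = (t < row1_start c.+1).
Proof.
rewrite /row1_col /= => t_lt; case: (ltnP t s) => [t_lt_s|le_st]; first by rewrite ltn_addr.
have K_gt0 : 0 < K by case: K t_lt => //; rewrite mul0n add0n; lia.
rewrite ltnS ltn_divLR //; lia.
Qed.

Lemma row1_col_eq n t c : t < K * n + s ->
  (row1_col t == c) = (row1_start c <= t < row1_start c.+1).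
Proof.
move=> t_lt; rewrite eqn_leq -(row1_col_ltS c t_lt) ltnS andbC; congr (_ && _).
case: c => [|c]; first by rewrite leq0n.
by rewrite ltnNge -ltnS (row1_col_ltS c t_lt) -leqNgt.
Qed.

Lemma row1_col_le n t : t < K * n + s -> row1_col t <= n.
Proof. by move=> t_lt; rewrite -ltnS (row1_col_ltS n t_lt) /= addnC. Qed.

End SecondRowColumns.

Record two_row_tableau (N n K s : nat) (R C : 'I_N -> nat) : Prop := TwoRowTableau {
  tab_row_le1 : forall x, R x <= 1;
  tab_col_le : forall x, C x <= n;
  tab_card_cell : forall i j, i <= 1 -> j <= n ->
    #|[set x | (R x == i) && (C x == j)]| = rho_kr K.+1 s.+1 i j;
  tab_row_incr : forall x y, R y = R x -> C y = (C x).+1 -> x < y;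
  tab_col_incr : forall x y, R y = (R x).+1 -> C y = C x -> x < y }.

Section TwoRowTableauTheory.
Variables (N n K s : nat) (R C : 'I_N -> nat).
Hypothesis T : two_row_tableau n K s R C.
Local Notation rho := (rho_kr K.+1 s.+1).

Lemma cell_nonempty i j : i <= 1 -> j <= n -> 0 < rho i j -> exists z, R z = i /\ C z = j.
Proof.
move=> le_i le_j; rewrite -(tab_card_cell T le_i le_j) card_gt0 => /set0Pn [z].
by rewrite inE => /andP [/eqP Rz /eqP Cz]; exists z.
Qed.

Lemma row_cell_nonempty y j : 0 < j <= C y -> exists z, R z = R y /\ C z = j.
Proof.
case/andP=> j_gt0 le_jC.
apply: cell_nonempty (tab_row_le1 T y) (leq_trans le_jC (tab_col_le T y)) _.
have -> : rho (R y) j = rho (R y) (C y).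
  by rewrite /rho_kr (gtn_eqF j_gt0) (gtn_eqF (leq_trans j_gt0 le_jC)).
rewrite -(tab_card_cell T (tab_row_le1 T y) (tab_col_le T y)) card_gt0.
by apply/set0Pn; exists y; rewrite inE !eqxx.
Qed.

Lemma row_sorted x y : R x = R y -> C x < C y -> x < y.
Proof.
move Ey: (C y) => c; elim: c y Ey => // c IH y Cy Rxy.
rewrite ltnS leq_eqVlt => /predU1P [Cx|ltCx]; first by apply: (tab_row_incr T); congruence.
have [z [Rz Cz]] : exists z, R z = R y /\ C z = c.
  by apply: row_cell_nonempty; rewrite Cy (leq_ltn_trans (leq0n _) ltCx) /=.
have lt_xz : x < z by apply: IH; congruence.
by apply: ltn_trans lt_xz _; apply: (tab_row_incr T); congruence.
Qed.

Definition row_prefix (i c : nat) : nat := #|[set z | (R z == i) && (C z < c)]|.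

Definition before (i : nat) (x : 'I_N) : nat := #|[set z | (R z == i) && (z < x)]|.

Lemma row_prefix0 i : row_prefix i 0 = 0.
Proof. by apply/eqP; rewrite cards_eq0; apply/eqP/setP => z; rewrite !inE ltn0 andbF. Qed.

Lemma row_prefixS i c : i <= 1 -> c <= n -> row_prefix i c.+1 = row_prefix i c + rho i c.
Proof.
move=> le_i le_c; rewrite /row_prefix -(cardsID [set z | C z == c]) -(tab_card_cell T le_i le_c).
by rewrite addnC; congr (_ + _); apply: eq_card => z; rewrite !inE ltnS;
  case: (ltngtP (C z) c); rewrite ?andbF ?andbT.
Qed.

Lemma row0_prefix c : c <= n.+1 -> row_prefix 0 c = c.
Proof.
elim: c => [|c IH] le_c; first exact: row_prefix0.
by rewrite row_prefixS // IH ?(ltnW le_c) // addn1.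
Qed.

Lemma row1_prefix c : c <= n.+1 -> row_prefix 1 c = row1_start K s c.
Proof.
elim: c => [|c IH] le_c; first exact: row_prefix0.
by rewrite row_prefixS // IH ?(ltnW le_c) // row1_startS.
Qed.

Lemma before_bounds x :
  row_prefix (R x) (C x) <= before (R x) x < row_prefix (R x) (C x).+1.
Proof.
have before_split : before (R x) x = row_prefix (R x) (C x)
    + #|[set z | (R z == R x) && (C z == C x) && (z < x)]|.
  rewrite /before /row_prefix -(cardsID [set z | C z < C x]).
  congr (_ + _); apply: eq_card => z; rewrite !inE; case: eqP => [Rz|_] /=; rewrite ?andbF //.
    by case: (ltnP (C z) (C x)) => ltCz; rewrite ?andbF ?andbT // row_sorted.
  case: (ltngtP (C z) (C x)) => ltCz; rewrite ?eqxx ?andbT ?andbF //=.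
  by apply/negbTE; rewrite -leqNgt ltnW // row_sorted.
have cell_lt : #|[set z | (R z == R x) && (C z == C x) && (z < x)]| < rho (R x) (C x).
  rewrite -(tab_card_cell T (tab_row_le1 T x) (tab_col_le T x)).
  apply: proper_card; apply/properP; split.
    by apply/subsetP => z; rewrite !inE => /andP [].
  by exists x; rewrite !inE ?ltnn ?andbF ?eqxx.
by rewrite before_split row_prefixS ?(tab_row_le1 T) ?(tab_col_le T) // leq_addr ltn_add2l.
Qed.

Lemma before_row0 x : R x = 0 -> before 0 x = C x.
Proof.
move=> Rx; have Cx_lt : C x < n.+1 by rewrite ltnS (tab_col_le T).
by have := before_bounds x; rewrite Rx !row0_prefix ?(ltnW Cx_lt) //; lia.
Qed.

Lemma before_row1 x : R x = 1 ->
  row1_start K s (C x) <= before 1 x < row1_start K s (C x).+1.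
Proof.
move=> Rx; have Cx_lt : C x < n.+1 by rewrite ltnS (tab_col_le T).
by have := before_bounds x; rewrite Rx !row1_prefix ?(ltnW Cx_lt).
Qed.

Lemma col_lt_before0 y : R y = 1 -> C y < before 0 y.
Proof.
move=> Ry; have <- : row_prefix 0 (C y).+1 = (C y).+1.
  by rewrite row0_prefix // ltnS (tab_col_le T).
apply: subset_leq_card; apply/subsetP => z; rewrite !inE ltnS => /andP [/eqP Rz le_Cz].
rewrite Rz eqxx /=; move: le_Cz; rewrite leq_eqVlt => /predU1P [Cz|ltCz].
  by apply: (tab_col_incr T); congruence.
have [z0 [Rz0 Cz0]] := cell_nonempty (leq0n 1) (tab_col_le T y) (isT : 0 < rho 0 (C y)).
have lt_z0y : z0 < y by apply: (tab_col_incr T); congruence.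
by apply: ltn_trans lt_z0y; apply: row_sorted; congruence.
Qed.

Lemma card_row0 : #|[set z | R z == 0]| = n.+1.
Proof.
rewrite -(row0_prefix (leqnn n.+1)); apply: eq_card => z.
by rewrite !inE ltnS (tab_col_le T) andbT.
Qed.

End TwoRowTableauTheory.

Section TwoRowEncoding.
Variables K s n : nat.
Local Notation rho := (rho_kr K.+1 s.+1).
Local Notation N := (svtN (two_row n) rho).
Local Notation cell := (cell_of (two_row n)).

Lemma svtN_two_row : N = (K * n + s + n).+1.
Proof.
rewrite /svtN big_ord_recr big_ord1 /=.
have row0 : \sum_(j < n.+1) rho 0 j = n.+1.
  by rewrite (eq_bigr (fun=> 1)) // sum_nat_const card_ord muln1.
have row1 : \sum_(j < n.+1) rho 1 j = s + n * K.
  rewrite big_ord_recl (eq_bigr (fun=> K)) => [|j _]; last by rewrite /rho_kr /= subn1.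
  by rewrite sum_nat_const card_ord /rho_kr /= subn1.
by rewrite row0 row1; lia.
Qed.

Lemma shape_width_two_row : shape_width (two_row n) = n.+1.
Proof. by rewrite /shape_width /= maxn0 maxnn. Qed.

Lemma nth_two_row (i : 'I_2) : nth 0 (two_row n) i = n.+1.
Proof. by case: i => [[|[|]]]. Qed.

Definition row (f : {ffun 'I_N -> cell}) (x : 'I_N) : nat := (f x).1.
Definition col (f : {ffun 'I_N -> cell}) (x : 'I_N) : nat := (f x).2.

Lemma is_svt_two_row f : is_svt f <-> two_row_tableau n K s (row f) (col f).
Proof.
have in_shapeE (c : cell) : in_shape (two_row n) (cnat c) = (c.2 <= n).
  by rewrite /in_shape /cnat /= ltn_ord nth_two_row.
split.
- case/and4P=> /forallP in_f /forallP card_f /forallP row_f /forallP col_f; split.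
  + by move=> x; rewrite /row -ltnS ltn_ord.
  + by move=> x; have := in_f x; rewrite in_shapeE.
  + move=> i j le_i le_j.
    have lt_j : j < shape_width (two_row n) by rewrite shape_width_two_row.
    have := card_f (Ordinal (le_i : i < 2), Ordinal lt_j); rewrite in_shapeE le_j => /eqP <-.
    by apply: eq_card => x; rewrite !inE; case: (f x).
  + move=> x y; rewrite /row /col => Ry Cy.
    by apply: (implyP (forallP (row_f x) y)); rewrite /cnat /= Ry Cy !eqxx.
  + move=> x y; rewrite /row /col => Ry Cy.
    by apply: (implyP (forallP (col_f x) y)); rewrite /cnat /= Ry Cy !eqxx.
- case=> _ col_le card_cell row_incr col_incr; apply/and4P; split.
  + by apply/forallP => x; rewrite in_shapeE col_le.
  + apply/forallP => c; apply/implyP; rewrite in_shapeE => le_c.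
    by rewrite -card_cell // -ltnS ltn_ord.
  + by apply/'forall_forallP => x y; apply/implyP => /andP [/eqP Ry /eqP Cy]; exact: row_incr.
  + by apply/'forall_forallP => x y; apply/implyP => /andP [/eqP Ry /eqP Cy]; exact: col_incr.
Qed.

Definition two_row_word (w : seq bool) : bool :=
  if w is false :: w' then ballot K s w' && (count negb w' == n) else false.

Lemma two_row_wordP w : size w = N ->
  reflect (count negb w = n.+1 /\
           forall y, nth false w y -> row1_col K s (count id (take y w)) < count negb (take y w))
          (two_row_word w).
Proof.
rewrite svtN_two_row => size_w.
have ones_lt y : count negb w = n.+1 -> nth false w y -> count id (take y w) < K * n + s.
  move=> zeros_w w_y; have y_lt : y < size w by case: ltnP w_y => // le_wy; rewrite nth_default.
  have := @count_take_lt _ w erefl id y y_lt w_y.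
  have := count_predC id w; rewrite size_w (eq_count (a1 := predC id) (a2 := negb)) //.
  by rewrite zeros_w; lia.
case: w size_w ones_lt => [//|[] w] size_w ones_lt /=.
  by apply: ReflectF => -[_ /(_ 0 isT)].
apply: (iffP andP) => [[/ballotP ballot_w /eqP zeros_w]|[zeros_w col_lt]].
  split=> [|[|y] //= w_y]; first by rewrite zeros_w.
  rewrite (row1_col_ltS _ (ones_lt y.+1 _ w_y)) /=; last by rewrite zeros_w.
  by have := ballot_w y w_y; lia.
split; last by apply/eqP; lia.
apply/ballotP => y w_y.
have := col_lt y.+1 w_y; rewrite /= (row1_col_ltS _ (ones_lt y.+1 zeros_w w_y)) /=.
lia.
Qed.

Definition row_word (f : {ffun 'I_N -> cell}) : seq bool :=
  [seq row f y == 1 | y <- enum 'I_N].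

Lemma size_row_word f : size (row_word f) = N.
Proof. by rewrite size_map size_enum_ord. Qed.

Lemma nth_row_word f (y : 'I_N) : nth false (row_word f) y = (row f y == 1).
Proof. by rewrite (nth_map y) ?size_enum_ord // nth_ord_enum. Qed.

Definition word_col (w : seq bool) (y : nat) : nat :=
  if nth false w y then row1_col K s (count id (take y w)) else count negb (take y w).

Definition tableau_of_word (w : seq bool) : {ffun 'I_N -> cell} :=
  [ffun y : 'I_N => (inord (nth false w y),
                     cast_ord (esym shape_width_two_row) (inord (word_col w y)))].

Section TableauToWord.
Variable f : {ffun 'I_N -> cell}.
Hypothesis svt_f : is_svt f.
Let T : two_row_tableau n K s (row f) (col f) := iffLR (is_svt_two_row f) svt_f.

Lemma count_take_row_word (p : pred bool) y :
  count p (take y (row_word f)) = #|[set z : 'I_N | (z < y) && p (row f z == 1)]|.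
Proof.
rewrite (count_take_card (size_row_word f)).
by apply: eq_card => z; rewrite !inE nth_row_word.
Qed.

Lemma ones_row_word (y : 'I_N) : count id (take y (row_word f)) = before (row f) 1 y.
Proof. by rewrite count_take_row_word; apply: eq_card => z; rewrite !inE andbC. Qed.

Lemma zeros_row_word (y : 'I_N) : count negb (take y (row_word f)) = before (row f) 0 y.
Proof.
rewrite count_take_row_word; apply: eq_card => z; rewrite !inE andbC.
by have := tab_row_le1 T z; case: (row f z) => [|[]].
Qed.

Lemma word_col_row_word (y : 'I_N) : word_col (row_word f) y = col f y.
Proof.
rewrite /word_col nth_row_word.
have := tab_row_le1 T y; case Ry: (row f y) => [|[|//]] _ /=.
  by rewrite zeros_row_word (before_row0 T Ry).
have := before_row1 T Ry; rewrite ones_row_word => /andP [lo hi].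
have ones_lt : before (row f) 1 y < K * n + s.
  by apply: (leq_trans hi); rewrite /= addnC leq_add2r leq_mul2l (tab_col_le T) orbT.
by apply/eqP; rewrite (row1_col_eq _ ones_lt) lo.
Qed.

Lemma tableau_of_row_word : tableau_of_word (row_word f) = f.
Proof.
apply/ffunP => y; rewrite ffunE nth_row_word word_col_row_word.
have := tab_col_le T y; have := tab_row_le1 T y; rewrite /row /col.
case: (f y) => [i j] /= le_i le_j; congr (_, _); apply: val_inj => /=.
  by rewrite inordK; case: i le_i => [[|[|]]].
by rewrite inordK.
Qed.

Lemma two_row_word_row_word : two_row_word (row_word f).
Proof.
apply/(two_row_wordP (size_row_word f)); split.
  rewrite -(card_row0 T) -[X in count _ X](take_size (row_word f)) size_row_word.
  rewrite count_take_row_word; apply: eq_card => z; rewrite !inE ltn_ord /=.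
  by have := tab_row_le1 T z; case: (row f z) => [|[]].
move=> y w_y; have y_lt : y < N.
  by rewrite ltnNge; apply: contraL w_y => le_Ny; rewrite nth_default ?size_row_word.
rewrite -[y]/(val (Ordinal y_lt)) in w_y *.
have := word_col_row_word (Ordinal y_lt); rewrite /word_col w_y => ->.
rewrite zeros_row_word (col_lt_before0 T) //.
by apply/eqP; rewrite -nth_row_word.
Qed.

End TableauToWord.

Section WordToTableau.
Variable w : seq bool.
Hypotheses (word_w : two_row_word w) (size_w : size w = N).

Let zeros_w : count negb w = n.+1.
Proof. by case/(two_row_wordP size_w): word_w. Qed.

Let col_lt_zeros y :
  nth false w y -> row1_col K s (count id (take y w)) < count negb (take y w).
Proof. by case/(two_row_wordP size_w): word_w => _; apply. Qed.

Lemma ones_word : count id w = K * n + s.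
Proof.
have := count_predC id w; rewrite size_w svtN_two_row.
by rewrite (eq_count (a1 := predC id) (a2 := negb)) // zeros_w; lia.
Qed.

Lemma word_col_le y : y < N -> word_col w y <= n.
Proof.
rewrite /word_col; case w_y: (nth false w y) => y_lt.
  by apply: (row1_col_le (n := n)); rewrite -ones_word (count_take_lt size_w).
by rewrite -ltnS -zeros_w (count_take_lt size_w (p := negb)) ?w_y.
Qed.

Lemma row_tableau_of_word (y : 'I_N) : row (tableau_of_word w) y = nth false w y.
Proof. by rewrite /row ffunE /= inordK //; case: (nth false w y). Qed.

Lemma col_tableau_of_word (y : 'I_N) : col (tableau_of_word w) y = word_col w y.
Proof. by rewrite /col ffunE /= inordK // ltnS word_col_le. Qed.

Lemma row_word_tableau_of_word : row_word (tableau_of_word w) = w.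
Proof.
apply: (@eq_from_nth _ false) => [|y]; rewrite size_row_word ?size_w // => y_lt.
rewrite -[y]/(val (Ordinal y_lt)) nth_row_word row_tableau_of_word.
by case: (nth false w _).
Qed.

Lemma word_col_mono x y :
  nth false w x = nth false w y -> x <= y -> word_col w x <= word_col w y.
Proof.
rewrite /word_col => <- le_xy; case: (nth false w x); last exact: count_take_mono.
exact/row1_col_mono/count_take_mono.
Qed.

Lemma card_word_cell i j : i <= 1 -> j <= n ->
  #|[set y : 'I_N | (nth false w y == i :> nat) && (word_col w y == j)]| = rho i j.
Proof.
move=> le_i le_j; case: i le_i => [|[|//]] _.
  rewrite (eq_card (B := [set y : 'I_N | ~~ nth false w y
                                         && (j <= count negb (take y w) < j.+1)])).
    by rewrite card_rank_window // zeros_w /rho_kr /=; lia.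
  move=> y; rewrite !inE /word_col; case: (nth false w y) => //=.
  by rewrite ltnS -eqn_leq eq_sym.
rewrite (eq_card (B := [set y : 'I_N | nth false w y
    && (row1_start K s j <= count id (take y w) < row1_start K s j.+1)])).
  have le_start : row1_start K s j <= row1_start K s j.+1 by rewrite row1_startS leq_addr.
  have start_le : row1_start K s j.+1 <= K * n + s.
    by rewrite /= addnC leq_add2r leq_mul2l le_j orbT.
  rewrite card_rank_window // ones_word !(minn_idPl _) ?(leq_trans le_start) //.
  by rewrite row1_startS addKn.
move=> y; rewrite !inE /word_col; case w_y: (nth false w y) => //=.
rewrite (row1_col_eq _ (_ : _ < K * n + s)) // -ones_word (count_take_lt size_w) //.
Qed.

Lemma is_svt_tableau_of_word : is_svt (tableau_of_word w).
Proof.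
apply/is_svt_two_row; split=> [x|x|i j le_i le_j|x y|x y];
  rewrite ?row_tableau_of_word ?col_tableau_of_word.
- by case: (nth false w x).
- exact: word_col_le.
- rewrite -card_word_cell //; apply: eq_card => y.
  by rewrite !inE row_tableau_of_word col_tableau_of_word.
- move=> Ry Cy; rewrite ltnNge; apply/negP => le_yx.
  have Rxy : nth false w y = nth false w x by move: Ry; do 2!case: (nth false w _).
  by have := word_col_mono Rxy le_yx; rewrite Cy ltnn.
- case w_x: (nth false w x); case w_y: (nth false w y) => //= _ Cxy.
  have := col_lt_zeros w_y; rewrite /word_col w_x w_y in Cxy; rewrite Cxy.
  by apply: contraTltn => /(count_take_mono w negb); rewrite -leqNgt.
Qed.

End WordToTableau.

Lemma card_svt_two_row : svt_count (two_row n) rho = count two_row_word (bool_words N).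
Proof.
rewrite /svt_count cardE -(size_map row_word) -size_filter; apply/perm_size/uniq_perm.
- rewrite map_inj_in_uniq ?enum_uniq // => f g; rewrite !mem_enum !inE => svt_f svt_g eq_fg.
  by rewrite -(tableau_of_row_word svt_f) eq_fg tableau_of_row_word.
- by rewrite filter_uniq // bool_words_uniq.
move=> w; rewrite mem_filter mem_bool_words; apply/mapP/andP => [[f]|[word_w /eqP size_w]].
  by rewrite mem_enum inE => svt_f ->; rewrite two_row_word_row_word // size_row_word.
exists (tableau_of_word w); first by rewrite mem_enum inE is_svt_tableau_of_word.
by rewrite row_word_tableau_of_word.
Qed.

Lemma count_two_row_word :
  count two_row_word (bool_words N)
  = count (fun w => ballot K s w && (count negb w == n)) (bool_words (K * n + s + n)).
Proof. by rewrite svtN_two_row count_bool_wordsS count_pred0. Qed.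

End TwoRowEncoding.

Local Open Scope ring_scope.

Theorem theorem3 (k r n : nat) (hk : (1 <= k)%N) (hr : (1 <= r)%N) :
  (r%:R / (k * n + r)%:R * ('C(k * n + r, n))%:R : rat)
  = (svt_count (two_row n) (rho_kr k r))%:R.
Proof.
case: k hk => [//|K] _; case: r hr => [//|s] _.
rewrite card_svt_two_row count_two_row_word (count_ballot (y := n) (s := s) erefl).
by rewrite ballot_number_closed.
Qed.
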